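(* Let $P$ be a finite poset and $f\colon\mathcal{J}(P)\to\mathbb{R}$ a real-valued statistic. Suppose that, viewing $f$ as a statistic with values in $\mathbb{R}(q)$, we have $f=c(q)+\sum_{p\in P}c_p(q)T_p^q$ for some rational functions $c(q),c_p(q)\in\mathbb{R}(q)$. Then none of $c(q)$, $c_p(q)$ has a singularity at any nonnegative real number, and for every real $z\ge0$ we have $f=c(z)+\sum_{p\in P}c_p(z)\,T_p^q|_{z}$, where $T_p^q|_z=T_p^+-zT_p^-$.
   Context: $\mathcal{J}(P)$ is the set of order ideals of $P$. For $p\in P$, $I\in\mathcal{J}(P)$: $T_p^+(I)=1$ if $p$ is a minimal element of $P\setminus I$, else $0$; $T_p^-(I)=1$ if $p$ is a maximal element of $I$, else $0$. $T_p^q\coloneqq T_p^+-qT_p^-$ is a statistic $\mathcal{J}(P)\to\mathbb{R}(q)$, where $q$ is an indeterminate and $\mathbb{R}(q)$ the field of rational functions. *)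

From HB Require Import structures.
From mathcomp Require Import all_boot all_order all_algebra.
From mathcomp Require Import fraction.
From mathcomp Require Import reals.
Set Implicit Arguments. Unset Strict Implicit. Unset Printing Implicit Defensive.
Import Order.TTheory GRing.Theory Num.Theory.
Local Open Scope ring_scope.
Local Open Scope order_scope.

Section Defs.
Context {d : Order.disp_t} (P : finPOrderType d).

Definition is_order_ideal (I : {set P}) : bool :=
  [forall x, forall y, (x \in I) && (y <= x) ==> (y \in I)].

Definition order_ideals : {set {set P}} := [set I | is_order_ideal I].

Definition Tplus (p : P) (I : {set P}) : nat :=
  [&& p \notin I & [forall x, (x < p) ==> (x \in I)]].

Definition Tminus (p : P) (I : {set P}) : nat :=
  [&& p \in I & [forall x, (p < x) ==> (x \notin I)]].
End Defs.

Section Rat.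
Context (R : realType).
Definition ratfun := {fraction {poly R}}.
Definition rconst (a : R) : ratfun := tofrac (a%:P).

Definition Tq {d : Order.disp_t} (P : finPOrderType d) (p : P) (I : {set P}) : ratfun :=
  tofrac (((Tplus p I)%:R - 'X * (Tminus p I)%:R : {poly R})).

Definition Tq_at {d : Order.disp_t} (P : finPOrderType d) (p : P) (I : {set P}) (z : R) : R :=
  (Tplus p I)%:R - z * (Tminus p I)%:R.

(* c has no singularity at z, with value v there: c = n/m with m(z) <> 0, v = n(z)/m(z)
   (the value is independent of the chosen representation). *)
Definition regular_at_with_value (c : ratfun) (z v : R) : Prop :=
  exists n m : {poly R}, [/\ m.[z] != 0, c = tofrac n / tofrac m & v = n.[z] / m.[z]].
End Rat.

From HB Require Import structures.
From mathcomp Require Import all_boot all_order all_algebra.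
From mathcomp Require Import fraction generic_quotient.
From mathcomp Require Import reals.
From mathcomp Require Import ring lra.
Import Order.TTheory GRing.Theory Num.Theory.
Set Implicit Arguments. Unset Strict Implicit. Unset Printing Implicit Defensive.

(* Clearing denominators turns the hypothesis into a polynomial identity
   D f = N + \sum_p N_p T_p^q on J(P).  If D(z) = 0 for some z >= 0, evaluating
   at z gives a linear relation between 1 and the statistics T_p^q|_z, and these
   are linearly independent for every z >= 0; so z is a common root of all the
   numerators and X - z cancels.  Independence is tested on explicit ideals at
   z = 0; for 0 < z <> 1, rowmotion turns the relation into an eigenvalue equation
   for a function on the finite set J(P); at z = 1, toggling shows that the Gram
   matrix of the T_p has nonpositive off-diagonal entries, so the absolute
   values of a relation again form a relation, which then dies by downward
   induction on P. *)

Section OrderIdeals.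
Local Open Scope order_scope.
Context {d : Order.disp_t} (P : finPOrderType d).
Implicit Types (I : {set P}) (p r x y : P).

Definition min_out p I : bool := [&& p \notin I & [forall x, (x < p) ==> (x \in I)]].
Definition max_in p I : bool := [&& p \in I & [forall x, (p < x) ==> (x \notin I)]].

Lemma TplusE p I : Tplus p I = min_out p I. Proof. by []. Qed.
Lemma TminusE p I : Tminus p I = max_in p I. Proof. by []. Qed.

Lemma min_outP p I : reflect (p \notin I /\ forall x, x < p -> x \in I) (min_out p I).
Proof.
apply: (iffP andP) => [[pI /forallP below]|[pI below]]; split=> //.
  by move=> x /(implyP (below x)).
by apply/forallP => x; apply/implyP/below.
Qed.

Lemma max_inP p I : reflect (p \in I /\ forall x, p < x -> x \notin I) (max_in p I).
Proof.
apply: (iffP andP) => [[pI /forallP above]|[pI above]]; split=> //.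
  by move=> x /(implyP (above x)).
by apply/forallP => x; apply/implyP/above.
Qed.

Lemma order_idealP I :
  reflect (forall x y, x \in I -> y <= x -> y \in I) (I \in order_ideals P).
Proof.
rewrite inE; apply: (iffP forallP) => [idI x y xI yx|idI x].
  by move: (idI x) => /forallP /(_ y) /implyP; apply; rewrite xI yx.
by apply/forallP => y; apply/implyP => /andP [xI yx]; exact: idI xI yx.
Qed.

Lemma order_ideal0 : set0 \in order_ideals P.
Proof. by apply/order_idealP => x y; rewrite inE. Qed.

Lemma order_idealT : setT \in order_ideals P.
Proof. by apply/order_idealP => x y; rewrite !inE. Qed.

Lemma max_in0 p : max_in p set0 = false.
Proof. by apply/max_inP; rewrite inE; case. Qed.

Lemma min_outT p : min_out p setT = false.
Proof. by apply/min_outP; rewrite inE; case. Qed.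

Definition down_set p : {set P} := [set x | x <= p].
Definition not_above p : {set P} := [set x | ~~ (p <= x)].
Definition not_strictly_above p : {set P} := [set x | ~~ (p < x)].

Lemma down_set_ideal p : down_set p \in order_ideals P.
Proof. by apply/order_idealP => x y; rewrite !inE => xp yx; apply: le_trans yx xp. Qed.

Lemma not_above_ideal p : not_above p \in order_ideals P.
Proof.
apply/order_idealP => x y; rewrite !inE => px yx; apply: contra px => py.
exact: le_trans py yx.
Qed.

Lemma not_strictly_above_ideal p : not_strictly_above p \in order_ideals P.
Proof.
apply/order_idealP => x y; rewrite !inE => px yx; apply: contra px => py.
exact: lt_le_trans py yx.
Qed.

Lemma max_in_down_set r p : max_in r (down_set p) = (r == p).
Proof.
apply/max_inP/eqP => [[rp above]|->].
  move: rp; rewrite inE le_eqVlt => /orP [/eqP //|rp].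
  by move: (above p rp); rewrite inE lexx.
split=> [|x px]; first by rewrite inE.
by rewrite inE; apply: contraL px => /le_gtF ->.
Qed.

Lemma min_out_not_above r p : min_out r (not_above p) = (r == p).
Proof.
apply/min_outP/eqP => [[pr below]|->].
  move: pr; rewrite inE negbK le_eqVlt => /orP [/eqP //|pr].
  by move: (below p pr); rewrite inE lexx.
split=> [|x xp]; first by rewrite inE negbK.
by rewrite inE; apply: contraL xp => /le_gtF ->.
Qed.

Lemma max_in_not_strictly_above p : max_in p (not_strictly_above p).
Proof. by apply/max_inP; split=> [|x px]; rewrite inE ?ltxx ?px. Qed.

Lemma min_out_not_strictly_above r p : min_out r (not_strictly_above p) -> p < r.
Proof. by case/min_outP; rewrite inE negbK. Qed.

Definition rowmotion I : {set P} := [set x | [exists y, min_out y I && (x <= y)]].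

Lemma rowmotion_ideal I : rowmotion I \in order_ideals P.
Proof.
apply/order_idealP => x y; rewrite !inE => /existsP [w /andP [wI xw]] yx.
by apply/existsP; exists w; rewrite wI (le_trans yx xw).
Qed.

Lemma max_in_rowmotion p I : max_in p (rowmotion I) = min_out p I.
Proof.
apply/max_inP/min_outP => [[pR above]|[pI below]].
  move: pR; rewrite inE => /existsP [w /andP [/min_outP wmin pw]].
  have [-> //|pw'] := eqVneq p w.
  have ltpw : p < w by rewrite lt_neqAle pw' pw.
  have := above w ltpw; rewrite inE => /existsP []; exists w.
  by rewrite lexx andbT; apply/min_outP.
split=> [|x px].
  by rewrite inE; apply/existsP; exists p; rewrite lexx andbT; apply/min_outP.
rewrite inE; apply/existsP => -[w /andP [/min_outP [_ wbelow] xw]].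
by move: pI; rewrite wbelow // (lt_le_trans px xw).
Qed.

Lemma toggle_ideal p I : p \notin I ->
  ((p |: I) \in order_ideals P) && max_in p (p |: I) =
  (I \in order_ideals P) && min_out p I.
Proof.
move=> pI; apply/andP/andP.
  move=> [/order_idealP idI /max_inP [_ above]]; split.
    apply/order_idealP => x y xI yx.
    have : y \in p |: I by apply: idI yx; rewrite setU1r.
    rewrite in_setU1 => /orP [/eqP yp|//]; subst y.
    have px : p < x by rewrite lt_neqAle yx andbT; apply: contraNneq pI => ->.
    by move: (above x px); rewrite setU1r.
  apply/min_outP; split=> // x xp.
  have : x \in p |: I by apply: idI (ltW xp); rewrite setU11.
  by rewrite in_setU1 (lt_eqF xp).
move=> [/order_idealP idI /min_outP [_ below]]; split.
  apply/order_idealP => x y; rewrite !in_setU1 => /orP [/eqP ->|xI] yx.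
    by move: yx; rewrite le_eqVlt => /orP [->//|/below ->]; rewrite orbT.
  by rewrite (idI x y xI yx) orbT.
apply/max_inP; split=> [|x px]; first exact: setU11.
rewrite in_setU1 negb_or (gt_eqF px) /=.
by apply: contra pI => xI; apply: idI xI (ltW px).
Qed.

Lemma min_out_setU1 p r I : r != p -> min_out r I -> min_out r (p |: I).
Proof.
move=> rp /min_outP [rI below]; apply/min_outP; split.
  by rewrite in_setU1 negb_or rp.
by move=> x xr; rewrite setU1r // below.
Qed.

Lemma max_in_setU1 p r I : r != p -> max_in r (p |: I) -> max_in r I.
Proof.
move=> rp /max_inP [rI above]; apply/max_inP; split.
  by move: rI; rewrite in_setU1 (negbTE rp).
by move=> x rx; move: (above x rx); rewrite in_setU1 negb_or => /andP [].
Qed.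

End OrderIdeals.

Section ToggleSum.
Local Open Scope ring_scope.
Context {d : Order.disp_t} (P : finPOrderType d) (R : nzRingType).

Lemma sum_Tminus_toggle p (phi : {set P} -> R) :
  \sum_(I in order_ideals P) (Tminus p I)%:R * phi I =
  \sum_(I in order_ideals P) (Tplus p I)%:R * phi (p |: I).
Proof.
pose toggle (I : {set P}) := if p \in I then I :\ p else p |: I.
have toggleK : involutive toggle.
  move=> I; rewrite /toggle; have [pI|pI] := boolP (p \in I).
    by rewrite setD11 setD1K.
  by rewrite setU11 setU1K.
rewrite big_mkcond [RHS]big_mkcond (reindex_inj (inv_inj toggleK)) /=.
apply: eq_bigr => I _; rewrite /toggle TplusE TminusE; have [pI|pI] := boolP (p \in I).
  have /negbTE -> : ~~ max_in p (I :\ p) by apply/max_inP; rewrite setD11; case.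
  have /negbTE -> : ~~ min_out p I by apply/min_outP; rewrite pI; case.
  by rewrite !mul0r !if_same.
have := toggle_ideal pI.
by case: (_ \in _); case: max_in; case: (_ \in _); case: min_out => //= _; rewrite mul0r.
Qed.

End ToggleSum.

Section GramMatrix.
Local Open Scope ring_scope.
Context (R : realDomainType) (T : finType).
Implicit Types (G : T -> T -> R) (b w : T -> R).

Lemma sum_sqr_lin_comb (S : finType) (J : {pred S}) (F : T -> S -> R) w :
  \sum_(s in J) (\sum_r w r * F r s) ^+ 2 =
  \sum_p w p * \sum_r w r * \sum_(s in J) F p s * F r s.
Proof.
under eq_bigr => s _ do rewrite expr2 mulr_suml.
rewrite exchange_big /=; apply: eq_bigr => p _.
rewrite mulr_sumr; under [RHS]eq_bigr => r _ do rewrite !mulr_sumr.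
rewrite exchange_big /=; apply: eq_bigr => s _.
by rewrite mulr_sumr; apply: eq_bigr => r _; ring.
Qed.

Lemma kernel_norm_le0 G b :
  (forall p, 0 <= G p p) -> (forall p r, r != p -> G p r <= 0) ->
  (forall p, \sum_r b r * G p r = 0) ->
  forall p, \sum_r `|b r| * G p r <= 0.
Proof.
move=> Gdiag Goff Gb p.
have offE : b p * G p p = - \sum_(r | r != p) b r * G p r.
  by apply/eqP; rewrite -addr_eq0; move: (Gb p); rewrite (bigD1 p) //= => ->.
have : `|b p| * G p p <= \sum_(r | r != p) `|b r| * - G p r.
  rewrite -(ger0_norm (Gdiag p)) -normrM offE normrN.
  apply: le_trans (ler_norm_sum _ _ _) _; apply: ler_sum => r rp.
  by rewrite normrM (ler0_norm (Goff _ _ rp)).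
have -> : \sum_(r | r != p) `|b r| * - G p r = - \sum_(r | r != p) `|b r| * G p r.
  by rewrite -sumrN; apply: eq_bigr => r _; rewrite mulrN.
by move=> ineq; rewrite (bigD1 p) //=; lra.
Qed.

End GramMatrix.

Section Independence.
Local Open Scope ring_scope.
Context (R : realType) {d : Order.disp_t} (P : finPOrderType d).
Implicit Types (I : {set P}) (p r : P) (a z : R) (b w : P -> R).

Definition Tq_relation z a b :=
  forall I, I \in order_ideals P -> a + \sum_p b p * Tq_at p I z = 0.

Lemma sum_mul_delta b p (e : P -> bool) :
  (forall r, e r = (r == p)) -> \sum_r b r * (e r)%:R = b p.
Proof.
move=> eE; rewrite (bigD1 p) //= eE eqxx mulr1 big1 ?addr0 // => r rp.
by rewrite eE (negbTE rp) mulr0.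
Qed.

Lemma Tq_relation0 a b : Tq_relation 0 a b -> a = 0 /\ forall p, b p = 0.
Proof.
move=> rel; have Tq_at0 p I : Tq_at p I 0 = (Tplus p I)%:R by rewrite /Tq_at mul0r subr0.
have a0 : a = 0.
  have := rel _ (order_idealT P); rewrite big1 ?addr0 // => p _.
  by rewrite Tq_at0 TplusE min_outT mulr0.
split=> // p; have := rel _ (not_above_ideal p); rewrite a0 add0r.
under eq_bigr do rewrite Tq_at0 TplusE.
by rewrite (sum_mul_delta _ (fun r => min_out_not_above r p)).
Qed.

(* With H := \sum_p b p T_p^- + a / (1 - z), the relation says H (rowmotion I)
   = z H I; rowmotion eventually cycles, and z ^+ n != z ^+ m for m < n. *)
Lemma Tq_relation_pos z a b : 0 < z -> z != 1 -> Tq_relation z a b ->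
  a = 0 /\ forall p, b p = 0.
Proof.
move=> z_gt0 z_neq1 rel; have z1 : 1 - z != 0 by rewrite subr_eq0 eq_sym.
pose G I := \sum_p b p * (Tminus p I)%:R.
pose H I := G I + a / (1 - z).
have iter_ideal m I : I \in order_ideals P ->
    iter m (@rowmotion _ P) I \in order_ideals P.
  by case: m => // m _; rewrite iterS rowmotion_ideal.
have H_rowmotion I : I \in order_ideals P -> H (rowmotion I) = z * H I.
  move=> idI; have := rel I idI.
  have -> : \sum_p b p * Tq_at p I z = G (rowmotion I) - z * G I.
    rewrite mulr_sumr -sumrB; apply: eq_bigr => p _.
    by rewrite TminusE max_in_rowmotion -TplusE /Tq_at; ring.
  rewrite /H -[in a + _](divfK z1 a) => rowE.
  by apply/eqP; rewrite -subr_eq0; apply/eqP; rewrite -[RHS]rowE; ring.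
have H_iter m I : I \in order_ideals P ->
    H (iter m (@rowmotion _ P) I) = z ^+ m * H I.
  elim: m => [|m IHm] idI; first by rewrite mul1r.
  by rewrite iterS H_rowmotion ?iter_ideal // IHm // exprS mulrA.
have H0 I : I \in order_ideals P -> H I = 0.
  move=> idI; have /trajectP [i lt_i_ord iterE] := looping_order (@rowmotion _ P) I.
  have := H_iter (order (@rowmotion _ P) I) _ idI; rewrite iterE H_iter // => /eqP; rewrite -subr_eq0 -mulrBl.
  rewrite mulf_eq0 => /orP [|/eqP //].
  rewrite -(subnKC (ltnW lt_i_ord)) exprD -[X in X - _]mulr1 -mulrBr mulf_eq0.
  rewrite expf_eq0 (gt_eqF z_gt0) andbF /= subr_eq0 eq_sym pexpr_eq1 ?ltW //.
    by rewrite (negbTE z_neq1).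
  by rewrite subn_gt0.
have a0 : a = 0.
  have := H0 _ (order_ideal0 P); rewrite /H /G big1 ?add0r => [|p _]; last first.
    by rewrite TminusE max_in0 mulr0.
  by move/eqP; rewrite mulf_eq0 invr_eq0 (negbTE z1) orbF => /eqP.
split=> // p; have := H0 _ (down_set_ideal p); rewrite /H /G a0 mul0r addr0.
by rewrite (sum_mul_delta _ (fun r => max_in_down_set r p)).
Qed.

Lemma sum_Tq_at1 p : \sum_(I in order_ideals P) Tq_at p I 1 = 0 :> R.
Proof.
under eq_bigr do rewrite /Tq_at mul1r.
rewrite sumrB; apply/eqP; rewrite subr_eq0; apply/eqP.
have := sum_Tminus_toggle p (fun=> 1 : R).
by under eq_bigr do rewrite mulr1; under [in RHS]eq_bigr do rewrite mulr1.
Qed.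

(* Toggling p into I can only create minimal non-members and destroy maximal
   members other than p. *)
Lemma gram_Tq_at1_le0 p r : r != p ->
  \sum_(I in order_ideals P) Tq_at p I 1 * Tq_at r I 1 <= 0 :> R.
Proof.
move=> rp; under eq_bigr do rewrite {1}/Tq_at mul1r mulrBl.
rewrite sumrB sum_Tminus_toggle -sumrB; apply: sumr_le0 => I _.
rewrite -mulrBr; apply: mulr_ge0_le0; first exact: ler0n.
rewrite /Tq_at !mul1r !TplusE !TminusE subr_le0 lerB ?ler_nat //.
  by case: min_out (@min_out_setU1 _ _ p r I rp) => // ->.
by case: max_in (@max_in_setU1 _ _ p r I rp) => //; case: max_in => // /(_ isT).
Qed.

Lemma Tq_relation1_nonneg w : (forall p, 0 <= w p) -> Tq_relation 1 0 w ->
  forall p, w p = 0.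
Proof.
move=> w_ge0 rel p; have [n] := ubnP #|[set x | (p < x)%O]|.
elim: n p => // n IHn p; rewrite ltnS => card_p.
have w_above x : (p < x)%O -> w x = 0.
  move=> px; apply: IHn; apply: leq_trans card_p; apply: proper_card.
  apply/properP; split; last by exists x; rewrite !inE ?ltxx.
  by apply/subsetP => y; rewrite !inE; apply: lt_trans.
have := rel _ (not_strictly_above_ideal p); rewrite add0r.
under eq_bigr => r _ do rewrite /Tq_at mul1r mulrBr TplusE.
rewrite sumrB big1 => [|r _]; last first.
  case: min_out (@min_out_not_strictly_above _ _ r p) => [/(_ isT)/w_above ->|_].
    by rewrite mul0r.
  by rewrite mulr0.
rewrite add0r => /eqP; rewrite oppr_eq0 => /eqP /psumr_eq0P sum0.
have := sum0 (fun r _ => mulr_ge0 (w_ge0 r) (ler0n _ _)) p isT.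
by rewrite TminusE max_in_not_strictly_above mulr1.
Qed.

Lemma Tq_relation1 a b : Tq_relation 1 a b -> a = 0 /\ forall p, b p = 0.
Proof.
move=> rel.
have a0 : a = 0.
  have : \sum_(I in order_ideals P) (a + \sum_p b p * Tq_at p I 1) = 0 by apply: big1.
  rewrite big_split /= exchange_big /=.
  under [X in _ + X]eq_bigr => p _ do rewrite -mulr_sumr sum_Tq_at1 mulr0.
  rewrite big1_eq addr0 sumr_const => /eqP; rewrite mulrn_eq0 => /orP [|/eqP //].
  by move/eqP/card0_eq/(_ set0); rewrite order_ideal0.
pose Gm p r : R := \sum_(I in order_ideals P) Tq_at p I 1 * Tq_at r I 1.
have Gm_kernel p : \sum_r b r * Gm p r = 0.
  under eq_bigr do rewrite mulr_sumr.
  rewrite exchange_big big1 // => I idI.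
  have := rel I idI; rewrite a0 add0r => rel0.
  transitivity (Tq_at p I 1 * \sum_r b r * Tq_at r I 1); last by rewrite rel0 mulr0.
  by rewrite mulr_sumr; apply: eq_bigr => r _; ring.
have Gm_diag p : 0 <= Gm p p by apply: sumr_ge0 => I _; rewrite -expr2 sqr_ge0.
have absb := kernel_norm_le0 Gm_diag (@gram_Tq_at1_le0) Gm_kernel.
have sq_le0 : \sum_(I in order_ideals P) (\sum_r `|b r| * Tq_at r I 1) ^+ 2 <= 0.
  rewrite sum_sqr_lin_comb; apply: sumr_le0 => p _.
  exact: mulr_ge0_le0 (normr_ge0 _) (absb p).
have rel_abs : Tq_relation 1 0 (fun r => `|b r|).
  move=> I idI; rewrite add0r; apply/eqP; rewrite -sqrf_eq0; apply/eqP.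
  have sum_sq0 : \sum_(I in order_ideals P) (\sum_r `|b r| * Tq_at r I 1) ^+ 2 = 0.
    by apply/le_anti; rewrite sq_le0 sumr_ge0 // => J _; exact: sqr_ge0.
  exact: (psumr_eq0P (fun J _ => sqr_ge0 _) sum_sq0) I idI.
split=> // p; apply/normr0_eq0.
exact: Tq_relation1_nonneg (fun r => normr_ge0 _) rel_abs p.
Qed.

Lemma Tq_relation_trivial z a b : 0 <= z -> Tq_relation z a b ->
  a = 0 /\ forall p, b p = 0.
Proof.
rewrite le_eqVlt => /orP [/eqP <-|z_gt0]; first exact: Tq_relation0.
have [->|z_neq1] := eqVneq z 1; first exact: Tq_relation1.
exact: Tq_relation_pos.
Qed.

End Independence.

Section CommonDenominator.
Local Open Scope ring_scope.
Local Open Scope quotient_scope.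
Context (R : idomainType).
Implicit Types (x : {fraction R}) (a b c : R).

Definition frac_num x : R := \n_(repr x).
Definition frac_den x : R := \d_(repr x).

Lemma frac_den_neq0 x : frac_den x != 0.
Proof. exact: denom_ratioP. Qed.

Lemma fractionE x : x = tofrac (frac_num x) / tofrac (frac_den x).
Proof.
rewrite /frac_num /frac_den; set r := repr x.
have -> : x = \pi_{fraction R} r by rewrite /r reprK.
have dr_neq0 : tofrac \d_r != 0 :> {fraction R} by rewrite tofrac_eq0 denom_ratioP.
apply: (mulIf dr_neq0); rewrite divfK //; unlock tofrac.
rewrite -[_ * _]/(FracField.mul _ _) -FracField.pi_mul; apply/eqmodP => /=.
rewrite /FracField.equivf /FracField.mulf.
by rewrite !numden_Ratio ?mulr1 ?mul1r ?oner_eq0 ?mulf_neq0 ?denom_ratioP // mulrC.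
Qed.

Lemma tofrac_cancel a b c : c != 0 ->
  tofrac (a * c) / tofrac (b * c) = tofrac a / tofrac b :> {fraction R}.
Proof.
by move=> c_neq0; rewrite !tofracM invfM mulrACA divff ?mulr1 // tofrac_eq0.
Qed.

Lemma common_denominator (I : finType) (x : I -> {fraction R}) :
  exists (D : R) (N : I -> R), D != 0 /\ forall i, x i = tofrac (N i) / tofrac D.
Proof.
pose D := \prod_i frac_den (x i).
exists D, (fun i => frac_num (x i) * \prod_(j | j != i) frac_den (x j)); split.
  by apply/prodf_neq0 => i _; exact: frac_den_neq0.
move=> i; have -> : D = frac_den (x i) * \prod_(j | j != i) frac_den (x j).
  by rewrite /D (bigD1 i).
rewrite tofrac_cancel -?fractionE //.
by apply/prodf_neq0 => j _; exact: frac_den_neq0.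
Qed.

End CommonDenominator.

Section Descent.
Local Open Scope ring_scope.
Context (R : realType) {d : Order.disp_t} (P : finPOrderType d) (f : {set P} -> R).
Implicit Types (D Nc : {poly R}) (Np : P -> {poly R}) (z : R).

Definition Tpoly (p : P) (I : {set P}) : {poly R} :=
  (Tplus p I)%:R - 'X * (Tminus p I)%:R.

Lemma horner_Tpoly p I z : (Tpoly p I).[z] = Tq_at p I z.
Proof. by rewrite /Tpoly /Tq_at !(hornerE, hornerMn). Qed.

Definition poly_identity D Nc Np :=
  forall I, I \in order_ideals P -> (f I)%:P * D = Nc + \sum_p Np p * Tpoly p I.

Lemma clear_denominators D Nc Np : D != 0 ->
  (forall I, I \in order_ideals P ->
     rconst (f I) = tofrac Nc / tofrac D + \sum_p tofrac (Np p) / tofrac D * Tq R p I) ->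
  poly_identity D Nc Np.
Proof.
move=> D_neq0 fE I idI; apply/eqP; rewrite -tofrac_eq; apply/eqP.
have D_neq0' : tofrac D != 0 :> ratfun R by rewrite tofrac_eq0.
rewrite tofracM -[tofrac _]/(rconst (f I)) fE // tofracD rmorph_sum mulrDl mulr_suml.
rewrite divfK //; congr (_ + _); apply: eq_bigr => p _.
by rewrite mulrAC divfK // -rmorphM.
Qed.

Lemma poly_identity_horner D Nc Np z I : poly_identity D Nc Np ->
  I \in order_ideals P -> f I * D.[z] = Nc.[z] + \sum_p (Np p).[z] * Tq_at p I z.
Proof.
move=> id idI; have /(congr1 (horner^~ z)) := id I idI.
rewrite /= hornerM hornerC hornerD horner_sum => ->; congr (_ + _).
by apply: eq_bigr => p _; rewrite hornerM horner_Tpoly.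
Qed.

Lemma poly_identity_root D Nc Np z : 0 <= z -> poly_identity D Nc Np -> root D z ->
  root Nc z /\ forall p, root (Np p) z.
Proof.
move=> z_ge0 id /rootP Dz; have rel : Tq_relation z Nc.[z] (fun p => (Np p).[z]).
  by move=> I idI; rewrite -(poly_identity_horner z id idI) Dz mulr0.
have [Ncz Npz] := Tq_relation_trivial z_ge0 rel.
by split=> [|p]; apply/rootP.
Qed.

Lemma poly_identity_divXsubC D Nc Np z : root D z -> root Nc z ->
  (forall p, root (Np p) z) -> poly_identity D Nc Np ->
  let L := 'X - z%:P in poly_identity (D %/ L) (Nc %/ L) (fun p => Np p %/ L).
Proof.
move=> Dz Ncz Npz id L I idI.
have L_neq0 : L != 0 by rewrite polyXsubC_eq0.
have divLK q : root q z -> q %/ L * L = q by move=> qz; rewrite divpK // dvdp_XsubCl.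
apply: (mulIf L_neq0); rewrite -mulrA divLK // id // mulrDl divLK // mulr_suml.
by congr (_ + _); apply: eq_bigr => p _; rewrite mulrAC divLK.
Qed.

Lemma poly_identity_regular D Nc Np z : 0 <= z -> D != 0 -> poly_identity D Nc Np ->
  exists D' Nc' Np', [/\ ~~ root D' z, poly_identity D' Nc' Np',
    tofrac Nc' / tofrac D' = tofrac Nc / tofrac D &
    forall p, tofrac (Np' p) / tofrac D' = tofrac (Np p) / tofrac D].
Proof.
move=> z_ge0; have [n] := ubnP (size D); elim: n D Nc Np => // n IHn D Nc Np.
rewrite ltnS => size_D D_neq0 id.
have [Dz|Dz] := boolP (root D z); last by exists D, Nc, Np; split.
have [Ncz Npz] := poly_identity_root z_ge0 id Dz.
pose L := 'X - z%:P; have L_neq0 : L != 0 by rewrite polyXsubC_eq0.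
have divLK q : root q z -> q %/ L * L = q by move=> qz; rewrite divpK // dvdp_XsubCl.
have frac_divL q : root q z -> tofrac (q %/ L) / tofrac (D %/ L) = tofrac q / tofrac D.
  by move=> qz; rewrite -(tofrac_cancel _ _ L_neq0) !divLK.
have [|||D' [Nc' [Np' [D'z id' NcE NpE]]]] :=
  IHn (D %/ L) (Nc %/ L) (fun p => Np p %/ L).
- rewrite size_divp // size_XsubC subn1; apply: leq_trans size_D.
  by rewrite ltn_predL size_poly_gt0.
- by apply: contraNneq D_neq0 => D'0; rewrite -(divLK D Dz) D'0 mul0r.
- exact: poly_identity_divXsubC.
exists D', Nc', Np'; split=> // [|p].
  by rewrite NcE frac_divL.
by rewrite NpE frac_divL.
Qed.

Lemma poly_identity_eval D Nc Np z I : ~~ root D z -> poly_identity D Nc Np ->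
  I \in order_ideals P ->
  f I = Nc.[z] / D.[z] + \sum_p (Np p).[z] / D.[z] * Tq_at p I z.
Proof.
move=> Dz id idI; apply: (mulIf Dz).
rewrite (poly_identity_horner z id idI) mulrDl divfK // mulr_suml; congr (_ + _).
by apply: eq_bigr => p _; rewrite mulrAC divfK.
Qed.

End Descent.

Unset Implicit Arguments.
Local Open Scope ring_scope.

Theorem lemma5p6 (R : realType) (d : Order.disp_t) (P : finPOrderType d)
    (f : {set P} -> R) (c : ratfun R) (cp : P -> ratfun R) :
  (forall I, I \in order_ideals P ->
     rconst (f I) = c + \sum_(p : P) cp p * Tq R p I) ->
  forall z : R, 0 <= z ->
    exists (cz : R) (cpz : P -> R),
      [/\ regular_at_with_value c z cz,
          (forall p, regular_at_with_value (cp p) z (cpz p)) &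
          (forall I, I \in order_ideals P ->
             f I = cz + \sum_(p : P) cpz p * Tq_at p I z)].
Proof.
move=> fE z z_ge0.
have [D [N [D_neq0 NE]]] :=
  common_denominator (fun o : option P => if o is Some p then cp p else c).
have id : poly_identity f D (N None) (N \o Some).
  apply: clear_denominators => // I idI.
  by rewrite fE // (NE None); under eq_bigr do rewrite (NE (Some _)).
have [D' [Nc' [Np' [D'z id' NcE NpE]]]] := poly_identity_regular z_ge0 D_neq0 id.
exists (Nc'.[z] / D'.[z]), (fun p => (Np' p).[z] / D'.[z]); split.
- by exists Nc', D'; rewrite (NE None) NcE.
- by move=> p; exists (Np' p), D'; rewrite (NE (Some p)) NpE.
- by move=> I; apply: poly_identity_eval.
Qed.
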